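(* Let $0<\alpha<1$, $\gamma>0$, and let $h$ be a real normalised probability density on $(0,\infty)$ satisfying $$h(x)=\frac{\gamma}{x}\int_0^x\frac{h(u)}{(x-\alpha u)^{\gamma}}\,du,\qquad x\in(0,\infty).$$ Then $h$ is positive and for all $0<x<\infty$, $$\gamma x^{-\gamma-1}\exp\!\left[-(1-\alpha)^{-\gamma}x^{-\gamma}\right]\le h(x)\le \gamma(1-\alpha)^{-\gamma}x^{-\gamma-1}\exp\!\left[-x^{-\gamma}\right].$$ *)

From HB Require Import structures.
From mathcomp Require Import all_boot all_order all_algebra.
From mathcomp Require Import all_classical all_reals all_analysis.
Set Implicit Arguments. Unset Strict Implicit. Unset Printing Implicit Defensive.
Import Order.TTheory GRing.Theory Num.Theory.
Local Open Scope classical_set_scope.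
Local Open Scope ring_scope.

Definition prob_density_pos (R : realType) (h : R -> R) : Prop :=
  [/\ measurable_fun (`](0:R), +oo[ : set R) h,
      (forall x, 0 < x -> 0 <= h x) &
      (\int[@lebesgue_measure R]_(x in `](0%R:R), +oo[) (h x)%:E = 1)%E ].

From HB Require Import structures.
From mathcomp Require Import all_boot all_order all_algebra.
From mathcomp Require Import all_classical all_reals all_analysis.
From mathcomp Require Import ring.
Import Order.TTheory GRing.Theory Num.Theory.
Import numFieldNormedType.Exports measurable_realfun.
Local Open Scope classical_set_scope.
Local Open Scope ring_scope.

(* Write H(x) = \int_0^x h. On (0, x) the kernel (x - alpha u)^-gamma lies between
   x^-gamma and (1 - alpha)^-gamma x^-gamma, so the integral equation squeezes h
   between gamma x^(-gamma-1) H and (1 - alpha)^-gamma gamma x^(-gamma-1) H.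
   As H is the integral of h, Groenwall's argument makes H(x) exp(x^-gamma)
   nondecreasing and H(x) exp((1 - alpha)^-gamma x^-gamma) nonincreasing.
   Comparing with a far point y, where H(y) -> 1 and y^-gamma -> 0, gives
   exp(-(1 - alpha)^-gamma x^-gamma) <= H(x) <= exp(-x^-gamma), and these bounds
   are substituted back into the squeeze for h. *)

Set Implicit Arguments.
Unset Strict Implicit.

Local Notation mu := (@lebesgue_measure _).

Section weighted_integral.
Context {d : measure_display} {T : measurableType d} {R : realType}.
Variables (nu : {measure set T -> \bar R}) (D : set T) (f w : T -> R).
Hypotheses (mD : measurable D) (mf : measurable_fun D f) (mw : measurable_fun D w).
Hypothesis f_ge0 : forall u, D u -> 0 <= f u.

Lemma ge0_integral_weight_ge (a : R) : 0 <= a -> (forall u, D u -> a <= w u) ->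
  (a%:E * \int[nu]_(u in D) (f u)%:E <= \int[nu]_(u in D) (f u * w u)%:E)%E.
Proof.
move=> a0 aw; rewrite -ge0_integralZl_EFin//; last exact/measurable_EFinP.
apply: ge0_le_integral => //.
- by move=> u Du; rewrite -EFinM lee_fin mulr_ge0// f_ge0.
- exact/measurable_funeM/measurable_EFinP.
- exact/measurable_EFinP/measurable_funM.
- by move=> u Du; rewrite -EFinM lee_fin mulrC ler_wpM2l ?f_ge0 ?aw.
Qed.

Lemma ge0_integral_weight_le (b : R) : 0 <= b -> (forall u, D u -> 0 <= w u <= b) ->
  (\int[nu]_(u in D) (f u * w u)%:E <= b%:E * \int[nu]_(u in D) (f u)%:E)%E.
Proof.
move=> b0 wb; rewrite -ge0_integralZl_EFin//; last exact/measurable_EFinP.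
apply: ge0_le_integral => //.
- by move=> u Du; have /andP[w0 _] := wb u Du; rewrite lee_fin mulr_ge0// f_ge0.
- exact/measurable_EFinP/measurable_funM.
- exact/measurable_funeM/measurable_EFinP.
- move=> u Du; have /andP[_ wub] := wb u Du.
  by rewrite -EFinM lee_fin [b * _]mulrC ler_wpM2l ?f_ge0.
Qed.

End weighted_integral.

Section powR_facts.
Variable R : realType.
Implicit Types a b g x : R.

Lemma ler_powRN a b g : 0 < a -> a <= b -> 0 <= g -> b `^ (- g) <= a `^ (- g).
Proof.
move=> a0 ab g0; have b0 : 0 < b := lt_le_trans a0 ab.
rewrite !powRN lef_pV2 ?posrE ?powR_gt0//.
by apply: ge0_ler_powR => //; rewrite nnegrE ltW.
Qed.

Lemma exists_powRN_le g e x : 0 < g -> 0 < e -> exists2 y, x < y & y `^ (- g) <= e.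
Proof.
move=> g0 e0; set y := Num.max (x + 1) (e `^ (- g^-1)).
exists y; first by rewrite lt_max ltrDl ltr01.
have ey : e `^ (- g^-1) <= y by rewrite le_max lexx orbT.
have e_pos : 0 < e `^ (- g^-1) by exact: powR_gt0.
apply: le_trans (ler_powRN e_pos ey (ltW g0)) _.
by rewrite -powRrM mulrNN mulVf ?gt_eqF// powRr1// ltW.
Qed.

Lemma powRB1 x g : 0 < x -> x `^ (- g - 1) = x `^ (- g) / x.
Proof.
move=> x0; rewrite powRD; last by rewrite (gt_eqF x0) implybT.
by rewrite powR_inv1// ltW.
Qed.

End powR_facts.

Section cumulative.
Variables (R : realType) (h : R -> R).
Hypothesis hd : prob_density_pos h.

Definition cumul (x : R) : R := (\int[mu]_(u in `](0:R), x[) h u)%R.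

Lemma integrable_density : mu.-integrable `](0:R), +oo[ (EFin \o h).
Proof.
case: hd => mh h0 h1; apply/integrableP; split; first exact/measurable_EFinP.
under eq_integral => u.
  rewrite inE/= in_itv/= andbT => u0.
  rewrite ger0_norm ?h0//.
  over.
by rewrite /= h1 ltry.
Qed.

Lemma integrable_density_sub (D : set R) : measurable D -> D `<=` `](0:R), +oo[ ->
  mu.-integrable D (EFin \o h).
Proof. by move=> mD DS; exact: integrableS integrable_density. Qed.

Lemma cumulE x : (\int[mu]_(u in `](0%R:R), x[) (h u)%:E)%E = (cumul x)%:E.
Proof.
rewrite /cumul /Rintegral fineK//; apply: integrable_fin_num => //.
by apply: integrable_density_sub => //; apply: subset_itvl; rewrite bnd_simp.
Qed.

Lemma cumul_ge0 x : 0 <= cumul x.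
Proof.
case: hd => _ h0 _; rewrite -lee_fin -cumulE; apply: integral_ge0 => u.
by rewrite /= in_itv/= => /andP[u0 _]; rewrite lee_fin h0.
Qed.

Lemma cumul_le1 x : cumul x <= 1.
Proof.
case: hd => mh h0 h1; rewrite -lee_fin -cumulE -h1.
apply: ge0_subset_integral => //; first exact/measurable_EFinP.
- by move=> u; rewrite /= in_itv/= andbT => u0; rewrite lee_fin h0.
- by apply: subset_itvl; rewrite bnd_simp.
Qed.

Lemma cumul_split x y : 0 < x -> x <= y -> cumul y = cumul x + (\int[mu]_(u in `[x, y]) h u)%R.
Proof.
move=> x0 xy; have hiy : mu.-integrable `](0:R), y[ (EFin \o h).
  by apply: integrable_density_sub => //; apply: subset_itvl; rewrite bnd_simp.
rewrite /cumul (@itv_bndbnd_setU _ _ (BRight 0) (BLeft x) (BLeft y)) ?bnd_simp//.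
rewrite Rintegral_setU//=; last 2 first.
- by rewrite -itv_bndbnd_setU// bnd_simp.
- apply/disj_set2P; rewrite -subset0 => z/=; rewrite !in_itv/= => -[/andP[_]].
  by rewrite ltNge => /negbTE ->.
congr (_ + _); apply: Rintegral_itv_bndo_bndc.
by apply: integrableS hiy => //; apply: subset_itvr; rewrite bnd_simp.
Qed.

Lemma cumul_cvgn : cumul n%:R @[n --> \oo] --> (1 : R).
Proof.
case: hd => mh h0 h1.
pose F (k : nat) := [set` Interval (BRight (0:R)) (BLeft k%:R)].
have nF : nondecreasing_seq F.
  by move=> n m nm; rewrite subsetEset; apply: subset_itvl; rewrite bnd_simp ler_nat.
have mF i : measurable_fun (F i) (EFin \o h).
  by apply/measurable_EFinP; apply: measurable_funS mh => //; apply: subset_itvl.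
have F0 i u : F i u -> (0 <= (EFin \o h) u)%E.
  by rewrite /F/= in_itv/= => /andP[u0 _]; rewrite lee_fin h0.
have := ge0_nondecreasing_set_cvg_integral (mu := mu) nF (fun i => measurable_itv _) mF F0.
rewrite -itvbndyEbigcup h1 (_ : (fun i => _) = (fun i => (cumul i%:R)%:E)).
  by move/fine_cvgP => [].
by apply/funext => i; rewrite -cumulE.
Qed.

Lemma exists_cumul_gt x e : 0 < e -> exists2 y, x < y & 1 - e < cumul y.
Proof.
move=> e0; near \oo => n; exists n%:R.
- by near: n; exact: nbhs_infty_gtr.
- by near: n; apply: (cvgr_gt 1 cumul_cvgn); rewrite ltrBlDr ltrDl.
Unshelve. all: by end_near.
Qed.

End cumulative.

Section gronwall.
Variable R : realType.
Variables (x y c : R) (phi Phi hh : R -> R).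
Hypothesis xy : x < y.
Hypothesis phi_cont : {within `[x, y], continuous phi}.
Hypothesis phi_ge0 : forall z, z \in `]x, y[ -> 0 <= phi z.
Hypothesis Phi_cont : {within `[x, y], continuous Phi}.
Hypothesis Phi_deriv : forall z, z \in `]x, y[ -> is_derive z 1 Phi (phi z).
Hypothesis hh_int : mu.-integrable `[x, y] (EFin \o hh).

(* hh is only integrable, so F need not be differentiable. Q only involves the
   integral of the continuous function phi * F, and Q' has the sign of
   F - (c + P), the integral of hh - phi * F. *)
Let F z := c + (\int[mu]_(t in `[x, z]) hh t)%R.
Let P z := (\int[mu]_(t in `[x, z]) (phi t * F t))%R.
Let Q z := (c + P z) * expR (- Phi z).

Let F_cont : {within `[x, y], continuous F}.
Proof.
move=> u; apply: (@continuousD _ _ (subspace `[x, y]) (fun=> c)); first exact: cvg_cst.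
exact: parameterized_integral_continuous (ltW xy) hh_int u.
Qed.

Let phiF_cont : {within `[x, y], continuous (fun t => phi t * F t)}.
Proof.
by move=> u; apply: (@continuousM R (subspace `[x, y]) phi F); [exact: phi_cont | exact: F_cont].
Qed.

Let phiF_int : mu.-integrable `[x, y] (EFin \o (fun t => phi t * F t)).
Proof. exact: continuous_compact_integrable (@segment_compact _ _ _) phiF_cont. Qed.

Let Q_cont : {within `[x, y], continuous Q}.
Proof.
move=> u; apply: (@continuousM R (subspace `[x, y]) (fun z => c + P z)).
  apply: (@continuousD _ _ (subspace `[x, y]) (fun=> c)); first exact: cvg_cst.
  exact: parameterized_integral_continuous (ltW xy) phiF_int u.
apply: (@continuous_comp (subspace `[x, y]) _ _ (fun z => - Phi z) expR).
  by apply: (@continuousN _ _ (subspace `[x, y])); exact: Phi_cont.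
exact: continuous_expR.
Qed.

Let Q_deriv z : z \in `]x, y[ ->
  is_derive z 1 Q (phi z * expR (- Phi z) * (F z - (c + P z))).
Proof.
move=> zxy; have := zxy; rewrite in_itv/= => /andP[xz zy].
have phiF_contz : {for z, continuous (fun t => phi t * F t)}.
  by have [+ _ _] := (continuous_within_itvP _ xy).1 phiF_cont; apply.
have [dP P'] := continuous_FTC1_closed zy phiF_int xz phiF_contz.
have iP : is_derive z 1 P (phi z * F z).
  by apply: DeriveDef; [exact: dP | rewrite -derive1E P'].
have iNPhi : is_derive z 1 (- Phi) (- phi z) by apply: is_deriveN; exact: Phi_deriv.
have iE : is_derive z 1 (expR \o (- Phi)) (expR (- Phi z) * - phi z).
  exact: is_derive1_comp (is_derive_expR _) iNPhi.
apply: is_derive_eq (is_deriveM (is_deriveD (is_derive_cst c _ _) iP) iE) _.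
by rewrite /GRing.scale /= !fctE; ring.
Qed.

Let P_x : P x = 0.
Proof. by rewrite /P set_itv1 Rintegral_set1. Qed.

Let le_Rintegral_itv (f g : R -> R) z :
  mu.-integrable `[x, y] (EFin \o f) -> mu.-integrable `[x, y] (EFin \o g) ->
  (forall u, x <= u <= y -> f u <= g u) -> x <= z <= y ->
  (\int[mu]_(t in `[x, z]) f t <= \int[mu]_(t in `[x, z]) g t)%R.
Proof.
move=> fi gi fg /andP[xz zy]; apply: le_Rintegral => //.
- by apply: integrableS fi => //; apply: subset_itvl; rewrite bnd_simp.
- by apply: integrableS gi => //; apply: subset_itvl; rewrite bnd_simp.
- by move=> u; rewrite /= in_itv/= => /andP[xu uz]; rewrite fg// xu (le_trans uz).
Qed.

Let x_in : x \in `[x, y]. Proof. by rewrite in_itv/= lexx ltW. Qed.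
Let y_in : y \in `[x, y]. Proof. by rewrite in_itv/= lexx ltW. Qed.

Let expR_shift a : a * expR (- Phi x) = a * expR (Phi y - Phi x) * expR (- Phi y).
Proof. by rewrite -mulrA -expRD; congr (_ * expR _); ring. Qed.

Lemma gronwall_ge : (forall u, x <= u <= y -> phi u * F u <= hh u) ->
  c * expR (Phi y - Phi x) <= c + (\int[mu]_(t in `[x, y]) hh t)%R.
Proof.
move=> phiF_hh; have P_le z : x <= z <= y -> P z <= \int[mu]_(t in `[x, z]) hh t.
  exact: le_Rintegral_itv.
have Qxy : Q x <= Q y.
  apply: (ger0_derive1_le_cc _ _ Q_cont x_in y_in (ltW xy)).
  - by move=> z /Q_deriv[].
  - move=> z zxy; rewrite derive1E; have [_ ->] := Q_deriv zxy.
    have := zxy; rewrite in_itv/= => /andP[xz zy].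
    apply: mulr_ge0; first by rewrite mulr_ge0 ?expR_ge0 ?phi_ge0.
    by rewrite subr_ge0 lerD2l P_le// !ltW.
rewrite /Q P_x addr0 expR_shift ler_pM2r ?expR_gt0// in Qxy.
by apply: le_trans Qxy _; rewrite lerD2l P_le// (ltW xy) lexx.
Qed.

Lemma gronwall_le : (forall u, x <= u <= y -> hh u <= phi u * F u) ->
  c + (\int[mu]_(t in `[x, y]) hh t)%R <= c * expR (Phi y - Phi x).
Proof.
move=> hh_phiF; have P_ge z : x <= z <= y -> \int[mu]_(t in `[x, z]) hh t <= P z.
  exact: le_Rintegral_itv.
have Qyx : Q y <= Q x.
  apply: (ler0_derive1_le_cc _ _ Q_cont y_in x_in (ltW xy)).
  - by move=> z /Q_deriv[].
  - move=> z zxy; rewrite derive1E; have [_ ->] := Q_deriv zxy.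
    have := zxy; rewrite in_itv/= => /andP[xz zy].
    apply: mulr_ge0_le0; first by rewrite mulr_ge0 ?expR_ge0 ?phi_ge0.
    by rewrite subr_le0 lerD2l P_ge// !ltW.
rewrite /Q P_x addr0 expR_shift ler_pM2r ?expR_gt0// in Qyx.
by apply: le_trans Qyx; rewrite lerD2l P_ge// (ltW xy) lexx.
Qed.
End gronwall.

Section gronwall_powR.
Variables (R : realType) (x y k g c : R) (hh : R -> R).
Hypotheses (x_gt0 : 0 < x) (xy : x < y) (k_ge0 : 0 <= k) (g_ge0 : 0 <= g).
Hypothesis hh_int : mu.-integrable `[x, y] (EFin \o hh).

Let phi u := k * g * u `^ (- g - 1).
Let Phi u := - k * u `^ (- g).

Let powR_cont (r : R) : {within `[x, y], continuous (fun u : R => u `^ r)}.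
Proof.
apply: derivable_within_continuous => u; rewrite in_itv/= => /andP[xu _].
by apply: derivable_powR; rewrite in_itv/= andbT (lt_le_trans x_gt0 xu).
Qed.

Let phi_cont : {within `[x, y], continuous phi}.
Proof.
move=> u; apply: (@continuousM R (subspace `[x, y]) (fun=> k * g) (fun u => u `^ (- g - 1))).
  exact: cvg_cst.
exact: powR_cont.
Qed.

Let phi_ge0 z : z \in `]x, y[ -> 0 <= phi z.
Proof. by move=> _; rewrite /phi !mulr_ge0// powR_ge0. Qed.

Let Phi_cont : {within `[x, y], continuous Phi}.
Proof.
move=> u; apply: (@continuousM R (subspace `[x, y]) (fun=> - k) (fun u => u `^ (- g))).
  exact: cvg_cst.
exact: powR_cont.
Qed.

Let Phi_deriv z : z \in `]x, y[ -> is_derive z 1 Phi (phi z).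
Proof.
rewrite in_itv/= => /andP[xz _]; have z0 := lt_trans x_gt0 xz.
apply: is_derive_eq (is_deriveZ (- k) (is_derive1_powR (- g) z0)) _.
by rewrite /phi /GRing.scale /=; ring.
Qed.

Let Phi_diff : Phi y - Phi x = k * x `^ (- g) - k * y `^ (- g).
Proof. by rewrite /Phi; ring. Qed.

Lemma gronwall_powR_ge :
  (forall u, x <= u <= y -> k * g * u `^ (- g - 1) * (c + \int[mu]_(t in `[x, u]) hh t) <= hh u) ->
  c * expR (k * x `^ (- g) - k * y `^ (- g)) <= c + (\int[mu]_(t in `[x, y]) hh t)%R.
Proof. by rewrite -Phi_diff; exact: gronwall_ge. Qed.

Lemma gronwall_powR_le :
  (forall u, x <= u <= y -> hh u <= k * g * u `^ (- g - 1) * (c + \int[mu]_(t in `[x, u]) hh t)) ->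
  c + (\int[mu]_(t in `[x, y]) hh t)%R <= c * expR (k * x `^ (- g) - k * y `^ (- g)).
Proof. by rewrite -Phi_diff; exact: gronwall_le. Qed.

End gronwall_powR.

Section kernel.
Variables (R : realType) (a g x : R).

Lemma powRN_kernel_bounds u : 0 <= a -> a < 1 -> 0 <= g -> 0 < x -> 0 <= u <= x ->
  x `^ (- g) <= ((x - a * u) `^ g)^-1 <= (1 - a) `^ (- g) * x `^ (- g).
Proof.
move=> a0 a1 g0 x0 /andP[u0 ux].
have lo : (1 - a) * x <= x - a * u by rewrite mulrBl mul1r lerB// ler_wpM2l.
have hi : x - a * u <= x by rewrite lerBlDr lerDl mulr_ge0.
have pos : 0 < (1 - a) * x by rewrite mulr_gt0// subr_gt0.
rewrite -powRN -powRM ?subr_ge0 ?(ltW a1) ?(ltW x0)//.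
by rewrite !ler_powRN// (lt_le_trans pos lo).
Qed.

Lemma measurable_invpowR_affine (D : set R) : measurable D ->
  measurable_fun D (fun u => ((x - a * u) `^ g)^-1).
Proof.
move=> mD; rewrite (_ : (fun u => _) = (fun u => (x - a * u) `^ (- g))); last first.
  by apply/funext => u; rewrite powRN.
apply: measurable_funTS; apply: (measurableT_comp (measurable_powR _)).
apply: continuous_measurable_fun => u.
apply: continuousB; first exact: cvg_cst.
by apply: continuousM; [exact: cvg_cst | exact: cvg_id].
Qed.

End kernel.

Section theorem3.
Variables (R : realType) (alpha gamma : R) (h : R -> R).
Hypotheses (alpha_gt0 : 0 < alpha) (alpha_lt1 : alpha < 1) (gamma_gt0 : 0 < gamma).
Hypothesis hd : prob_density_pos h.
Hypothesis heq : forall x : R, 0 < x ->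
  (h x)%:E = ((gamma / x)%:E *
    \int[mu]_(u in `](0%R:R), x[) (h u / (x - alpha * u) `^ gamma)%:E)%E.

Lemma density_cumul_bounds x : 0 < x ->
  gamma * x `^ (- gamma - 1) * cumul h x <= h x <=
  (1 - alpha) `^ (- gamma) * gamma * x `^ (- gamma - 1) * cumul h x.
Proof.
move=> x0; have [mh h_ge0 _] := hd.
have mhx : measurable_fun `](0:R), x[ h.
  by apply: measurable_funS mh => //; apply: subset_itvl; rewrite bnd_simp.
have hx_ge0 u : [set` `](0:R), x[] u -> 0 <= h u.
  by rewrite /= in_itv/= => /andP[u0 _]; exact: h_ge0.
have kernel u : [set` `](0:R), x[] u -> x `^ (- gamma) <= ((x - alpha * u) `^ gamma)^-1 <=
    (1 - alpha) `^ (- gamma) * x `^ (- gamma).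
  rewrite /= in_itv/= => /andP[u0 ux].
  by apply: powRN_kernel_bounds; rewrite ?(ltW alpha_gt0) ?(ltW gamma_gt0) ?(ltW u0) ?(ltW ux).
have mk := measurable_invpowR_affine alpha gamma x (measurable_itv `](0:R), x[).
have kernel_ge u : [set` `](0:R), x[] u -> x `^ (- gamma) <= ((x - alpha * u) `^ gamma)^-1.
  by move=> /kernel/andP[].
have kernel_le u : [set` `](0:R), x[] u -> 0 <= ((x - alpha * u) `^ gamma)^-1 <=
    (1 - alpha) `^ (- gamma) * x `^ (- gamma).
  by move=> /kernel/andP[kl ->]; rewrite andbT (le_trans _ kl) ?powR_ge0.
have lo := ge0_integral_weight_ge mu (measurable_itv _) mhx mk hx_ge0 (powR_ge0 x (- gamma))
  kernel_ge.
have hi := ge0_integral_weight_le mu (measurable_itv _) mhx mk hx_ge0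
  (mulr_ge0 (powR_ge0 (1 - alpha) (- gamma)) (powR_ge0 x (- gamma))) kernel_le.
rewrite (cumulE hd) -EFinM in lo; rewrite (cumulE hd) -EFinM in hi.
have gx_ge0 : (0 <= (gamma / x)%:E)%E by rewrite lee_fin divr_ge0 ?ltW.
apply/andP; split.
- rewrite (_ : _ * cumul h x = gamma / x * (x `^ (- gamma) * cumul h x)); last first.
    by rewrite powRB1//; ring.
  by rewrite -lee_fin heq// (EFinM (gamma / x)); exact: lee_wpmul2l.
- rewrite (_ : _ * cumul h x =
      gamma / x * ((1 - alpha) `^ (- gamma) * x `^ (- gamma) * cumul h x)); last first.
    by rewrite powRB1//; ring.
  by rewrite -lee_fin heq// (EFinM (gamma / x)); exact: lee_wpmul2l.
Qed.

Let integrable_itv x y : 0 < x -> mu.-integrable `[x, y] (EFin \o h).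
Proof.
move=> x0; apply: (integrable_density_sub hd) => // u.
by rewrite /= !in_itv/= => /andP[xu _]; rewrite andbT (lt_le_trans x0 xu).
Qed.

Lemma cumul_le_expR x : 0 < x -> cumul h x <= expR (- x `^ (- gamma)).
Proof.
move=> x0; have grow y : x < y -> cumul h x * expR (x `^ (- gamma) - y `^ (- gamma)) <= 1.
  move=> xy; apply: le_trans (cumul_le1 hd y); rewrite (cumul_split hd x0 (ltW xy)).
  rewrite -[x `^ _]mul1r -[y `^ _]mul1r.
  apply: (gronwall_powR_ge x0 xy ler01 (ltW gamma_gt0) (integrable_itv _ x0)).
  move=> u /andP[xu uy]; rewrite mul1r -(cumul_split hd x0 xu).
  by have /andP[] := density_cumul_bounds (lt_le_trans x0 xu).
rewrite expRN -[_^-1]mul1r ler_pdivlMr ?expR_gt0//.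
apply/ler_addgt0Pr => e e0.
have ln_gt0 : 0 < ln (1 + e) by rewrite ln_gt0// ltrDl.
have [y xy ye] := exists_powRN_le x gamma_gt0 ln_gt0.
rewrite -[x `^ _](subrK (y `^ (- gamma))) expRD mulrA.
apply: le_trans (ler_wpM2r (expR_ge0 _) (grow y xy)) _.
by rewrite mul1r -[1 + e]lnK ?posrE ?addr_gt0// ler_expR.
Qed.

Lemma expR_le_cumul x : 0 < x ->
  expR (- ((1 - alpha) `^ (- gamma) * x `^ (- gamma))) <= cumul h x.
Proof.
move=> x0; set c := (1 - alpha) `^ (- gamma).
have c_gt0 : 0 < c by rewrite powR_gt0// subr_gt0.
have shrink y : x < y -> cumul h y <= cumul h x * expR (c * x `^ (- gamma)).
  move=> xy; rewrite (cumul_split hd x0 (ltW xy)).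
  apply: le_trans (gronwall_powR_le x0 xy (ltW c_gt0) (ltW gamma_gt0) (integrable_itv _ x0) _) _.
    move=> u /andP[xu uy]; rewrite -(cumul_split hd x0 xu).
    by have /andP[] := density_cumul_bounds (lt_le_trans x0 xu).
  rewrite ler_wpM2l ?cumul_ge0// ler_expR gerBl.
  by rewrite mulr_ge0 ?powR_ge0// ltW.
rewrite expRN -[_^-1]mul1r ler_pdivrMr ?expR_gt0//.
apply/ler_addgt0Pr => e e0.
have [y xy cumul_y] := exists_cumul_gt hd x e0.
by rewrite -lerBlDr; apply/ltW/(lt_le_trans cumul_y)/shrink.
Qed.
End theorem3.

Unset Implicit Arguments.

Theorem mainTheorem3 (R : realType) (alpha gamma : R) (h : R -> R)
  (halpha0 : 0 < alpha) (halpha1 : alpha < 1) (hgamma : 0 < gamma)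
  (hdens : prob_density_pos h)
  (heq : forall x : R, 0 < x ->
     (h x)%:E = ((gamma / x)%:E *
       \int[@lebesgue_measure R]_(u in `](0%R:R), x[) (h u / (x - alpha * u) `^ gamma)%:E)%E) :
  forall x : R, 0 < x ->
    [/\ 0 < h x,
        gamma * x `^ (- gamma - 1) * expR (- ((1 - alpha) `^ (- gamma) * x `^ (- gamma))) <= h x &
        h x <= gamma * (1 - alpha) `^ (- gamma) * x `^ (- gamma - 1) * expR (- x `^ (- gamma))].
Proof.
move=> x x0.
have /andP[lo hi] := density_cumul_bounds halpha0 halpha1 hgamma hdens heq x0.
have cumul_lo := expR_le_cumul halpha0 halpha1 hgamma hdens heq x0.
have cumul_hi := cumul_le_expR halpha0 halpha1 hgamma hdens heq x0.
have weight_gt0 : 0 < gamma * x `^ (- gamma - 1) by rewrite mulr_gt0 ?powR_gt0.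
have lower := le_trans (ler_wpM2l (ltW weight_gt0) cumul_lo) lo.
split => //; first exact: lt_le_trans (mulr_gt0 weight_gt0 (expR_gt0 _)) lower.
apply: le_trans hi _; rewrite [_ * gamma]mulrC; apply: ler_wpM2l cumul_hi.
by rewrite !mulr_ge0 ?powR_ge0 ?(ltW hgamma).
Qed.
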